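(* Let $\Gamma_H$ be the H-junction tree with edges $e_1,\dots,e_5$ of propagation times $t_1,\dots,t_5$, linearly independent over $\mathbb{Q}$, where the two interior vertices are $A$ (incident to $e_1,e_2,e_3$) and $B$ (incident to $e_3,e_4,e_5$). Then for all $T\ge 0$ $$N(\Gamma_H,A,B,T) = \#[2n_1t_1 + 2n_2t_2 + 2n_3t_3 + 2n_4t_4 \le T - t_3] + \#[2n_1t_1 + 2n_2t_2 + 2n_3t_3 + 2n_5t_5 \le T - t_3] + \#[2n_1t_1 + 2n_2t_2 + 2n_4t_4 + 2n_5t_5 \le T - t_3] - \#[2n_1t_1 + 2n_2t_2 \le T - t_3].$$
   Context: $\Gamma_H$ has six vertices: $A$, $B$, and the four distinct valence-one endpoints of $e_1,e_2,e_4,e_5$ other than $A$, $B$; $e_3$ joins $A$ and $B$. Dynamics: each edge $e_i$ is traversed in time $t_i$; at time $0$ the process starts at $A$ (a point departs from $A$ along each incident edge); at a valence-one vertex a point is reflected; if $k$ points arrive simultaneously at an interior vertex of valence $v$, then $v$ points leave it, one along each incident edge, and $v-k$ new points are said to be born there. $N(\Gamma,A,X,T)$ is the total number of new points born at vertex $X$ up to the moment $T$ when the process starts at $A$. $\#[\text{inequality}]$ denotes the number of tuples of nonnegative integers $n_i$ satisfying the inequality (it is $0$ if the right-hand side is negative). *)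

From HB Require Import structures.
From mathcomp Require Import all_boot all_algebra.
From mathcomp Require Import boolp classical_sets fsbigop reals.
Set Implicit Arguments. Unset Strict Implicit. Unset Printing Implicit Defensive.
Import GRing.Theory Num.Theory.
Local Open Scope ring_scope.
Local Open Scope classical_set_scope.

Inductive vtx := VA | VB | V1 | V2 | V4 | V5.
Inductive edge := E1 | E2 | E3 | E4 | E5.

Definition ends (e : edge) : vtx * vtx :=
  match e with
  | E1 => (VA, V1) | E2 => (VA, V2) | E3 => (VA, VB)
  | E4 => (VB, V4) | E5 => (VB, V5)
  end.

Definition all_edges : seq edge := [:: E1; E2; E3; E4; E5].

Definition joins (e : edge) (u v : vtx) : Prop :=
  ends e = (u, v) \/ ends e = (v, u).

Definition incident (e : edge) (v : vtx) : Prop := exists u, joins e u v.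

Definition valence (v : vtx) : nat :=
  \sum_(e <- all_edges) (asbool (incident e v) : nat).

Definition tH (R : realType) (t1 t2 t3 t4 t5 : R) (e : edge) : R :=
  match e with E1 => t1 | E2 => t2 | E3 => t3 | E4 => t4 | E5 => t5 end.

(* At time 0 points leave the starting vertex src along each
   incident edge; whenever a point arrives at a vertex v (along any edge),
   at that moment points leave v along every incident edge (reflection at a
   valence-one vertex; at an interior vertex v points leave). *)
Inductive departs (R : realType) (t : edge -> R) (src : vtx) : vtx -> R -> Prop :=
| dep_start : departs t src src 0
| dep_step : forall (e : edge) (u v : vtx) (s : R),
    joins e u v -> departs t src u s -> departs t src v (s + t e).

Definition arrives_via (R : realType) (t : edge -> R) (src v : vtx) (e : edge)
    (tau : R) : Prop :=
  exists u s, joins e u v /\ departs t src u s /\ tau = s + t e.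

(* number k of points arriving simultaneously at v at time tau *)
Definition n_arrivals (R : realType) (t : edge -> R) (src v : vtx) (tau : R) : nat :=
  \sum_(e <- all_edges) (asbool (arrives_via t src v e tau) : nat).

Definition arrival_times (R : realType) (t : edge -> R) (src v : vtx) (T : R) : set R :=
  [set tau | tau <= T /\ exists e, arrives_via t src v e tau].

(* N(Gamma, src, X, T): total number of new points born at X up to moment T;
   at each arrival moment tau, valence X - k points are born. *)
Definition N_born (R : realType) (t : edge -> R) (src X : vtx) (T : R) : R :=
  \sum_(tau \in arrival_times t src X T)
     ((valence X - n_arrivals t src X tau)%N%:R : R).

(* #[ 2 n_1 a_1 + ... + 2 n_k a_k <= c ] : number of tuples of nonnegative
   integers (n_1,...,n_k), k = size a, satisfying the inequality. *)
Definition count_sol (R : realType) (a : seq R) (c : R) : R :=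
  \sum_(n \in [set n : seq nat | size n = size a /\
        \sum_(i < size a) 2 * (nth 0%N n i)%:R * nth 0 a i <= c]) (1 : R).

From HB Require Import structures.
From mathcomp Require Import all_boot all_order all_algebra.
From mathcomp Require Import boolp classical_sets fsbigop reals.
From mathcomp Require Import functions cardinality.
From mathcomp Require Import ring lra zify.
Import Order.TTheory GRing.Theory Num.Theory.
Local Open Scope ring_scope.
Local Open Scope classical_set_scope.
Set Implicit Arguments.
Unset Strict Implicit.
Unset Printing Implicit Defensive.

(* A point leaving A bounces back and forth along the edges, so the moments
   at which points leave B are exactly t3 + 2 (m1 t1 + ... + m5 t5) for
   m in N^5.  The moment indexed by m is an arrival along e4 iff m4 > 0, along
   e5 iff m5 > 0, and along e3 iff m3 > 0 or m4 = m5 = 0 (with m3 = 0 the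
   point must have gone A -> B without returning to A after visiting e4 or e5).
   Linear independence makes m |-> moment injective, so 3 - k at moment m equals
   [m5 = 0] + [m4 = 0] + [m3 = 0] - [m3 = m4 = m5 = 0], and summing over the
   moments <= T yields the four counts. *)

Lemma joins_sym e u v : joins e u v -> joins e v u.
Proof. by case=> H; [right|left]. Qed.

Lemma departs_bounce (R : realType) (t : edge -> R) src e u v s k :
  joins e u v -> departs t src u s -> departs t src u (s + 2 * (k%:R * t e)).
Proof.
move=> J D; elim: k => [|k IH]; first by rewrite mul0r mulr0 addr0.
have D' := dep_step (joins_sym J) (dep_step J IH).
by apply: (eq_ind _ (departs t src u) D'); rewrite -natr1; ring.
Qed.

Lemma fsbig_setI_indicator (T : choiceType) (R : pzSemiRingType) (A : set T)
    (p : pred T) :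
  \sum_(x \in A `&` [set x | p x]) (1 : R) = \sum_(x \in A) ((p x)%:R : R).
Proof.
rewrite (eq_fsbigr (fun x => (p x)%:R)); last by move=> x; rewrite inE => -[_ ->].
apply: fsbig_widen => [x [] //|x [Ax] /= npx].
by case: (boolP (p x)) npx => // px []; split.
Qed.

Lemma nat_multiples_bounded (R : archiRealFieldType) (c T : R) : 0 < c ->
  exists M, forall x : nat, x%:R * c <= T -> (x < M)%N.
Proof.
move=> c0; exists (Num.truncn (T / c)).+1 => x xcT.
have T0 : 0 <= T by apply: le_trans xcT; rewrite mulr_ge0 ?ler0n ?ltW.
rewrite ltnS truncn_ge_nat; last by rewrite divr_ge0 // ltW.
by rewrite ler_pdivlMr.
Qed.

(* A tuple [m : mult5] indexes the moment [arrival_at m] below; [m_i] counts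
   the round trips along [e_i]. *)
Definition mult5 := (nat * nat * nat * nat * nat)%type.

Definition arrival_cond (e : edge) (m : mult5) : bool :=
  let '(_, _, m3, m4, m5) := m in
  match e with
  | E3 => (0 < m3)%N || (m4 == 0%N) && (m5 == 0%N)
  | E4 => (0 < m4)%N
  | E5 => (0 < m5)%N
  | _ => false
  end.

Definition bounces (e : edge) (m : mult5) : nat :=
  match e with
  | E1 => m.1.1.1.1 | E2 => m.1.1.1.2 | E3 => m.1.1.2 | E4 => m.1.2 | E5 => m.2
  end.

Lemma exists_arrival_edge m : exists e, arrival_cond e m.
Proof.
case: m => [[[[m1 m2] [|m3]] [|m4]] [|m5]];
  by [exists E3 | exists E4 | exists E5].
Qed.

Lemma births_at_VB (R : pzRingType) m :
  ((3 - \sum_(e <- all_edges) arrival_cond e m)%N%:R : R) =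
    (bounces E5 m == 0%N)%:R + (bounces E4 m == 0%N)%:R + (bounces E3 m == 0%N)%:R
    - [&& bounces E3 m == 0%N, bounces E4 m == 0%N & bounces E5 m == 0%N]%:R.
Proof.
suff E : (3 - \sum_(e <- all_edges) arrival_cond e m
    + [&& bounces E3 m == 0%N, bounces E4 m == 0%N & bounces E5 m == 0%N]
    = (bounces E5 m == 0%N) + (bounces E4 m == 0%N) + (bounces E3 m == 0%N))%N.
  by rewrite -!natrD -E natrD addrK.
by case: m => [[[[m1 m2] [|m3]] [|m4]] [|m5]]; rewrite /all_edges !big_cons big_nil.
Qed.

Lemma valence_VB : valence VB = 3%N.
Proof.
rewrite /valence /all_edges !big_cons big_nil /=.
rewrite (asboolF (P := incident E1 VB)); last by case=> u [] [].
rewrite (asboolF (P := incident E2 VB)); last by case=> u [] [].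
rewrite (asboolT (P := incident E3 VB)); last by exists VA; left.
rewrite (asboolT (P := incident E4 VB)); last by exists V4; right.
by rewrite (asboolT (P := incident E5 VB)); last by exists V5; right.
Qed.

Section HJunction.
Variables (R : realType) (t1 t2 t3 t4 t5 : R).
Let t := tH t1 t2 t3 t4 t5.

Definition weight (m : mult5) : R :=
  let '(m1, m2, m3, m4, m5) := m in
  m1%:R * t1 + m2%:R * t2 + m3%:R * t3 + m4%:R * t4 + m5%:R * t5.

Definition arrival_at (m : mult5) : R := t3 + 2 * weight m.

Definition departure_form (v : vtx) (s : R) : Prop :=
  exists m : mult5, match v with
  | VA => s = 2 * weight m /\ arrival_cond E3 m
  | VB => s = 2 * weight m + t3
  | V1 => s = 2 * weight m + t1 /\ arrival_cond E3 m
  | V2 => s = 2 * weight m + t2 /\ arrival_cond E3 m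
  | V4 => s = 2 * weight m + t3 + t4
  | V5 => s = 2 * weight m + t3 + t5
  end.

Lemma departs_form v s : departs t VA v s -> departure_form v s.
Proof.
elim=> [|e u w s' J _ [[[[[m1 m2] m3] m4] m5] IH]].
  by exists (0, 0, 0, 0, 0)%N; split => //=; ring.
move: J; rewrite /joins /t; case: e => /= -[] [? ?]; subst.
- by case: IH => -> C; exists (m1, m2, m3, m4, m5); split => //=; ring.
- by case: IH => -> C; exists (m1.+1, m2, m3, m4, m5); split => //=; rewrite -natr1; ring.
- by case: IH => -> C; exists (m1, m2, m3, m4, m5); split => //=; ring.
- by case: IH => -> C; exists (m1, m2.+1, m3, m4, m5); split => //=; rewrite -natr1; ring.
- by case: IH => -> C; exists (m1, m2, m3, m4, m5) => /=; ring.
- by rewrite IH; exists (m1, m2, m3.+1, m4, m5); split => //=; rewrite -natr1; ring.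
- by rewrite IH; exists (m1, m2, m3, m4, m5) => /=; ring.
- by rewrite IH; exists (m1, m2, m3, m4.+1, m5) => /=; rewrite -natr1; ring.
- by rewrite IH; exists (m1, m2, m3, m4, m5) => /=; ring.
- by rewrite IH; exists (m1, m2, m3, m4, m5.+1) => /=; rewrite -natr1; ring.
Qed.

Lemma departs_VB m : departs t VA VB (2 * weight m + t3).
Proof.
case: m => [[[[m1 m2] m3] m4] m5].
have D1 := departs_bounce m1 (or_introl erefl : joins E1 VA V1) (dep_start t VA).
have D2 := departs_bounce m2 (or_introl erefl : joins E2 VA V2) D1.
have D3 := dep_step (or_introl erefl : joins E3 VA VB) D2.
have D4 := departs_bounce m3 (or_intror erefl : joins E3 VB VA) D3.
have D5 := departs_bounce m4 (or_introl erefl : joins E4 VB V4) D4.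
have D6 := departs_bounce m5 (or_introl erefl : joins E5 VB V5) D5.
by apply: (eq_ind _ (departs t VA VB) D6); rewrite /t /=; ring.
Qed.

Lemma departs_VA m : arrival_cond E3 m -> departs t VA VA (2 * weight m).
Proof.
case: m => [[[[m1 m2] [|m3]] m4] m5] /=; last first.
  move=> _; have D := dep_step (or_intror erefl : joins E3 VB VA)
    (departs_VB (m1, m2, m3, m4, m5)).
  by apply: (eq_ind _ (departs t VA VA) D); rewrite /t /= -natr1; ring.
case/andP=> /eqP -> /eqP ->.
have D1 := departs_bounce m1 (or_introl erefl : joins E1 VA V1) (dep_start t VA).
have D2 := departs_bounce m2 (or_introl erefl : joins E2 VA V2) D1.
by apply: (eq_ind _ (departs t VA VA) D2); rewrite /t /=; ring.
Qed.

Lemma arrives_VB_of e m :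
  arrival_cond e m -> arrives_via t VA VB e (arrival_at m).
Proof.
case: m => [[[[m1 m2] m3] m4] m5] C.
have J4 : joins E4 VB V4 by left.
have J5 : joins E5 VB V5 by left.
case: e C => //= C.
- exists VA, (2 * weight (m1, m2, m3, m4, m5)); split; first by left.
  by split; [exact: departs_VA | rewrite /arrival_at /t /=; ring].
- case: m4 C => // m4 _.
  exists V4, (2 * weight (m1, m2, m3, m4, m5) + t3 + t4); split; first by right.
  by split; [exact: dep_step J4 (departs_VB _) | rewrite /arrival_at /t /= -natr1; ring].
- case: m5 C => // m5 _.
  exists V5, (2 * weight (m1, m2, m3, m4, m5) + t3 + t5); split; first by right.
  by split; [exact: dep_step J5 (departs_VB _) | rewrite /arrival_at /t /= -natr1; ring].
Qed.

Lemma arrives_VB_form e tau :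
  arrives_via t VA VB e tau -> exists2 m, tau = arrival_at m & arrival_cond e m.
Proof.
case=> u [s [J [D ->]]].
case: e J D => /= -[] [] // <- D; case: (departs_form D) => -[[[[m1 m2] m3] m4] m5].
- by case=> -> C; exists (m1, m2, m3, m4, m5) => //; rewrite /arrival_at /t /=; ring.
- move=> ->; exists (m1, m2, m3, m4.+1, m5) => //.
  by rewrite /arrival_at /t /= -natr1; ring.
- move=> ->; exists (m1, m2, m3, m4, m5.+1) => //.
  by rewrite /arrival_at /t /= -natr1; ring.
Qed.

Hypothesis hindep : forall q1 q2 q3 q4 q5 : rat,
  ratr q1 * t1 + ratr q2 * t2 + ratr q3 * t3 + ratr q4 * t4 + ratr q5 * t5 = 0 ->
  q1 = 0 /\ q2 = 0 /\ q3 = 0 /\ q4 = 0 /\ q5 = 0.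

Lemma arrival_at_inj : injective arrival_at.
Proof.
move=> [[[[m1 m2] m3] m4] m5] [[[[n1 n2] n3] n4] n5]; rewrite /arrival_at /= => E.
have eq_of_sub0 (a b : nat) : (a%:R - b%:R : rat) = 0 -> a = b.
  by move/eqP; rewrite subr_eq0 eqr_nat => /eqP.
have := @hindep (m1%:R - n1%:R) (m2%:R - n2%:R) (m3%:R - n3%:R)
  (m4%:R - n4%:R) (m5%:R - n5%:R).
rewrite !rmorphB !rmorph_nat.
case; first lra.
by move=> /eq_of_sub0 -> [/eq_of_sub0 -> [/eq_of_sub0 -> [/eq_of_sub0 -> /eq_of_sub0 ->]]].
Qed.

Lemma arrives_VB_iff e m :
  arrives_via t VA VB e (arrival_at m) <-> arrival_cond e m.
Proof.
split; last exact: arrives_VB_of.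
by case/arrives_VB_form => m' /arrival_at_inj ->.
Qed.

Lemma n_arrivals_VB m :
  n_arrivals t VA VB (arrival_at m) = (\sum_(e <- all_edges) arrival_cond e m)%N.
Proof.
apply: eq_bigr => e _; congr nat_of_bool.
by apply/idP/idP => [/asboolP/arrives_VB_iff | /arrives_VB_iff/asboolP].
Qed.

Hypothesis hpos : 0 < t1 /\ 0 < t2 /\ 0 < t3 /\ 0 < t4 /\ 0 < t5.
Variable T : R.

Definition admissible : set mult5 := [set m | arrival_at m <= T].

Lemma admissible_bounce_le e m : admissible m -> (bounces e m)%:R * t e <= T.
Proof.
case: m => [[[[m1 m2] m3] m4] m5]; rewrite /admissible /arrival_at /= => le_mT.
case: hpos => p1 [p2 [p3 [p4 p5]]].
have n1 : 0 <= m1%:R * t1 by rewrite mulr_ge0 ?ler0n ?ltW.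
have n2 : 0 <= m2%:R * t2 by rewrite mulr_ge0 ?ler0n ?ltW.
have n3 : 0 <= m3%:R * t3 by rewrite mulr_ge0 ?ler0n ?ltW.
have n4 : 0 <= m4%:R * t4 by rewrite mulr_ge0 ?ler0n ?ltW.
have n5 : 0 <= m5%:R * t5 by rewrite mulr_ge0 ?ler0n ?ltW.
by case: e; rewrite /t /=; lra.
Qed.

Lemma admissible_finite : finite_set admissible.
Proof.
have [M ltM] : exists M, forall e m, admissible m -> (bounces e m < M)%N.
  case: hpos => p1 [p2 [p3 [p4 p5]]].
  have [M1 H1] := @nat_multiples_bounded _ _ T p1.
  have [M2 H2] := @nat_multiples_bounded _ _ T p2.
  have [M3 H3] := @nat_multiples_bounded _ _ T p3.
  have [M4 H4] := @nat_multiples_bounded _ _ T p4.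
  have [M5 H5] := @nat_multiples_bounded _ _ T p5.
  exists (M1 + M2 + M3 + M4 + M5)%N => e m /(admissible_bounce_le e).
  by case: e => /= [/H1|/H2|/H3|/H4|/H5]; lia.
apply: (@sub_finite_set _ _ (`I_M `*` `I_M `*` `I_M `*` `I_M `*` `I_M)).
  by case=> [[[[m1 m2] m3] m4] m5] Sm; do !split; [
    exact: (ltM E1 _ Sm) | exact: (ltM E2 _ Sm) | exact: (ltM E3 _ Sm)
  | exact: (ltM E4 _ Sm) | exact: (ltM E5 _ Sm)].
by do 4 apply: finite_setX => //; apply: finite_II.
Qed.

Lemma arrival_times_VB : arrival_times t VA VB T = arrival_at @` admissible.
Proof.
apply/seteqP; split.
  move=> tau [le_tauT [e /arrives_VB_form [m eq_tau _]]].
  by exists m; rewrite /admissible /= -eq_tau.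
move=> _ [m Sm <-]; split=> //.
by have [e C] := exists_arrival_edge m; exists e; apply: arrives_VB_of.
Qed.

Lemma count_sol_no_E5 : count_sol [:: t1; t2; t3; t4] (T - t3) =
  \sum_(m \in admissible `&` [set m | bounces E5 m == 0%N]) (1 : R).
Proof.
apply: (reindex_fsbig (fun m : mult5 => [:: m.1.1.1.1; m.1.1.1.2; m.1.1.2; m.1.2])).
split.
- move=> [[[[m1 m2] m3] m4] m5] [/= Sm /eqP m50]; subst m5; split => //=.
  rewrite !big_ord_recl big_ord0 /=.
  by move: Sm; rewrite /admissible /arrival_at /= mul0r; lra.
- move=> [[[[m1 m2] m3] m4] m5] [[[[n1 n2] n3] n4] n5].
  by rewrite !inE => -[_ /eqP /= ->] [_ /eqP /= ->] [-> -> -> ->].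
- case=> [|m1 [|m2 [|m3 [|m4 [|? ?]]]]] [] //= _.
  rewrite !big_ord_recl big_ord0 /= => le_T.
  exists (m1, m2, m3, m4, 0%N) => //; split => //=.
  by rewrite /admissible /arrival_at /= mul0r; lra.
Qed.

Lemma count_sol_no_E4 : count_sol [:: t1; t2; t3; t5] (T - t3) =
  \sum_(m \in admissible `&` [set m | bounces E4 m == 0%N]) (1 : R).
Proof.
apply: (reindex_fsbig (fun m : mult5 => [:: m.1.1.1.1; m.1.1.1.2; m.1.1.2; m.2])).
split.
- move=> [[[[m1 m2] m3] m4] m5] [/= Sm /eqP m40]; subst m4; split => //=.
  rewrite !big_ord_recl big_ord0 /=.
  by move: Sm; rewrite /admissible /arrival_at /= mul0r; lra.
- move=> [[[[m1 m2] m3] m4] m5] [[[[n1 n2] n3] n4] n5].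
  by rewrite !inE => -[_ /eqP /= ->] [_ /eqP /= ->] [-> -> -> ->].
- case=> [|m1 [|m2 [|m3 [|m5 [|? ?]]]]] [] //= _.
  rewrite !big_ord_recl big_ord0 /= => le_T.
  exists (m1, m2, m3, 0%N, m5) => //; split => //=.
  by rewrite /admissible /arrival_at /= mul0r; lra.
Qed.

Lemma count_sol_no_E3 : count_sol [:: t1; t2; t4; t5] (T - t3) =
  \sum_(m \in admissible `&` [set m | bounces E3 m == 0%N]) (1 : R).
Proof.
apply: (reindex_fsbig (fun m : mult5 => [:: m.1.1.1.1; m.1.1.1.2; m.1.2; m.2])).
split.
- move=> [[[[m1 m2] m3] m4] m5] [/= Sm /eqP m30]; subst m3; split => //=.
  rewrite !big_ord_recl big_ord0 /=.
  by move: Sm; rewrite /admissible /arrival_at /= mul0r; lra.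
- move=> [[[[m1 m2] m3] m4] m5] [[[[n1 n2] n3] n4] n5].
  by rewrite !inE => -[_ /eqP /= ->] [_ /eqP /= ->] [-> -> -> ->].
- case=> [|m1 [|m2 [|m4 [|m5 [|? ?]]]]] [] //= _.
  rewrite !big_ord_recl big_ord0 /= => le_T.
  exists (m1, m2, 0%N, m4, m5) => //; split => //=.
  by rewrite /admissible /arrival_at /= mul0r; lra.
Qed.

Lemma count_sol_no_E345 : count_sol [:: t1; t2] (T - t3) =
  \sum_(m \in admissible `&`
        [set m | [&& bounces E3 m == 0%N, bounces E4 m == 0%N & bounces E5 m == 0%N]])
    (1 : R).
Proof.
apply: (reindex_fsbig (fun m : mult5 => [:: m.1.1.1.1; m.1.1.1.2])).
split.
- move=> [[[[m1 m2] m3] m4] m5] [/= Sm /and3P[/eqP m30 /eqP m40 /eqP m50]].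
  subst m3 m4 m5; split => //=.
  rewrite !big_ord_recl big_ord0 /=.
  by move: Sm; rewrite /admissible /arrival_at /= !mul0r; lra.
- move=> [[[[m1 m2] m3] m4] m5] [[[[n1 n2] n3] n4] n5].
  rewrite !inE => -[_ /and3P[/eqP /= -> /eqP -> /eqP ->]].
  by move=> [_ /and3P[/eqP /= -> /eqP -> /eqP ->]] [-> ->].
- case=> [|m1 [|m2 [|? ?]]] [] //= _.
  rewrite !big_ord_recl big_ord0 /= => le_T.
  exists (m1, m2, 0%N, 0%N, 0%N) => //; split => //=.
  by rewrite /admissible /arrival_at /= !mul0r; lra.
Qed.

End HJunction.

Theorem mainTheorem4 (R : realType) (t1 t2 t3 t4 t5 : R)
  (hpos : 0 < t1 /\ 0 < t2 /\ 0 < t3 /\ 0 < t4 /\ 0 < t5)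
  (hindep : forall q1 q2 q3 q4 q5 : rat,
     ratr q1 * t1 + ratr q2 * t2 + ratr q3 * t3 + ratr q4 * t4 + ratr q5 * t5 = 0 ->
     q1 = 0 /\ q2 = 0 /\ q3 = 0 /\ q4 = 0 /\ q5 = 0)
  (T : R) (hT : 0 <= T) :
  N_born (tH t1 t2 t3 t4 t5) VA VB T =
    count_sol [:: t1; t2; t3; t4] (T - t3)
  + count_sol [:: t1; t2; t3; t5] (T - t3)
  + count_sol [:: t1; t2; t4; t5] (T - t3)
  - count_sol [:: t1; t2] (T - t3).
Proof.
have inj : set_inj (admissible t1 t2 t3 t4 t5 T) (arrival_at t1 t2 t3 t4 t5).
  by move=> m n _ _ /(arrival_at_inj hindep).
rewrite /N_born arrival_times_VB fsbig_image //.
rewrite (count_sol_no_E5 _ _ _ _ t5) (count_sol_no_E4 _ _ _ t4).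
rewrite (count_sol_no_E3 _ _ t3) (count_sol_no_E345 _ _ _ t4 t5).
rewrite !fsbig_setI_indicator.
under eq_fsbigr => m _ do rewrite (n_arrivals_VB hindep) valence_VB births_at_VB.
have fin : finite_set (admissible t1 t2 t3 t4 t5 T) by apply: admissible_finite.
by rewrite !fsbig_finite //= sumrB !big_split.
Qed.
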